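(* Let $m$ be a positive integer with $m\neq2^\beta$ for every integer $\beta\ge0$, let $T=2^{\lceil\lg m\rceil}-m-1$, and let $i\ge0$ be an integer. If $\varepsilon$ is a real number with $\frac{T+1}{2}+\frac{im}{2}\le\varepsilon<\frac{T+1}{2}+\frac{(i+1)m}{2}$, then $\ell_m(\varepsilon)=2+i+\lfloor\lg m\rfloor$.
   Context: $\lg$ denotes $\log_2$. The generalized Rice mapping $M:\mathbb{R}\to\mathbb{Z}_{\ge0}$ is $M(\varepsilon)=\lfloor 2\varepsilon\rfloor$ if $\varepsilon\ge0$ and $M(\varepsilon)=-\lfloor2\varepsilon\rfloor-1$ if $\varepsilon<0$. For a positive integer $m$, the Golomb codeword of a non-negative integer $N$ consists of $j=\lfloor N/m\rfloor$ in unary ($j+1$ bits) followed by $k=N\bmod m$ in minimal binary, which uses $\lfloor\lg m\rfloor$ bits if $k<2^{\lceil\lg m\rceil}-m$ and $\lceil\lg m\rceil$ bits otherwise; $\lambda_m(N)$ is the total number of bits. The code length of a real residual $\varepsilon$ is $\ell_m(\varepsilon)=\lambda_m(M(\varepsilon))$. *)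

From Stdlib Require Import Reals ZArith Arith Lia Lra.
Open Scope R_scope.

(* floor of a real: Int_part r = up r - 1 is the greatest integer <= r. *)
Definition rfloor (r : R) : Z := Int_part r.

Definition rice_map (e : R) : nat :=
  if Rle_dec 0 e then Z.to_nat (rfloor (2 * e))
  else Z.to_nat (- rfloor (2 * e) - 1)%Z.

(* lg = log2 : floor(lg m) = Nat.log2 m, ceil(lg m) = Nat.log2_up m. *)

Definition minbin_len (m k : nat) : nat :=
  if (k <? 2 ^ Nat.log2_up m - m)%nat then Nat.log2 m else Nat.log2_up m.

Definition golomb_len (m N : nat) : nat :=
  (N / m + 1 + minbin_len m (N mod m))%nat.

Definition code_len (m : nat) (e : R) : nat := golomb_len m (rice_map e).

(* Since m is not a power of two, ceil(lg m) = floor(lg m) + 1 and the threshold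
   c = 2^ceil(lg m) - m = T + 1 of the minimal binary code lies strictly between
   0 and m.  The hypothesis on e says exactly that M(e) lies in the window
   [i m + c, (i+1) m + c).  On that window the quotient N / m and the extra bit
   of the minimal binary code (paid exactly when N mod m >= c) trade off: their
   sum is always i + 1. *)

From Stdlib Require Import Reals ZArith Arith Lia Lra.
Open Scope R_scope.

Lemma log2_up_non_pow2 (m : nat) :
  (0 < m)%nat -> (forall beta : nat, m <> (2 ^ beta)%nat) ->
  Nat.log2_up m = S (Nat.log2 m).
Proof.
  intros hm hpow.
  pose proof (Nat.le_log2_log2_up m); pose proof (Nat.le_log2_up_succ_log2 m).
  destruct (Nat.eq_dec (Nat.log2 m) (Nat.log2_up m)) as [E|E]; [|lia].
  apply Nat.log2_log2_up_exact in E as [beta Hbeta]; [|exact hm].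
  now destruct (hpow beta).
Qed.

Lemma pow2_log2_lt_non_pow2 (m : nat) :
  (0 < m)%nat -> (forall beta : nat, m <> (2 ^ beta)%nat) ->
  (2 ^ Nat.log2 m < m < 2 ^ S (Nat.log2 m))%nat.
Proof.
  intros hm hpow.
  destruct (Nat.log2_spec m hm) as [Hlo Hhi].
  specialize (hpow (Nat.log2 m)). lia.
Qed.

Lemma div_plus_mod_ge_window (m c i N : nat) :
  (0 < c < m)%nat -> (i * m + c <= N < (i + 1) * m + c)%nat ->
  (N / m + (if N mod m <? c then 0 else 1) = S i)%nat.
Proof.
  intros Hc HN.
  destruct (Nat.lt_ge_cases (N - i * m) m) as [Hr|Hr].
  - replace (N / m)%nat with i
      by (apply Nat.div_unique with (N - i * m)%nat; lia).
    replace (N mod m)%nat with (N - i * m)%nat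
      by (apply Nat.mod_unique with i; lia).
    destruct (Nat.ltb_spec (N - i * m) c); lia.
  - replace (N / m)%nat with (S i)
      by (apply Nat.div_unique with (N - i * m - m)%nat; lia).
    replace (N mod m)%nat with (N - i * m - m)%nat
      by (apply Nat.mod_unique with (S i); lia).
    destruct (Nat.ltb_spec (N - i * m - m) c); lia.
Qed.

Lemma golomb_len_window (m i N : nat) :
  (0 < m)%nat -> (forall beta : nat, m <> (2 ^ beta)%nat) ->
  let c := (2 ^ Nat.log2_up m - m)%nat in
  (i * m + c <= N < (i + 1) * m + c)%nat ->
  golomb_len m N = (2 + i + Nat.log2 m)%nat.
Proof.
  intros hm hpow c HN.
  pose proof (pow2_log2_lt_non_pow2 m hm hpow).
  assert (Hc : (0 < c < m)%nat)
    by (unfold c; rewrite (log2_up_non_pow2 m hm hpow); simpl in *; lia).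
  pose proof (div_plus_mod_ge_window m c i N Hc HN).
  unfold golomb_len, minbin_len; fold c.
  rewrite (log2_up_non_pow2 m hm hpow).
  destruct (N mod m <? c)%nat; lia.
Qed.

Lemma rice_map_window (a b : nat) (e : R) :
  INR a <= 2 * e < INR b -> (a <= rice_map e < b)%nat.
Proof.
  intros [Ha Hb].
  pose proof (pos_INR a).
  unfold rice_map, rfloor.
  destruct (Rle_dec 0 e) as [_|He]; [|lra].
  destruct (base_Int_part (2 * e)) as [Hfl Hfu].
  assert (Z.of_nat a - 1 < Int_part (2 * e))%Z
    by (apply lt_IZR; rewrite minus_IZR, <- INR_IZR_INZ; simpl; lra).
  assert (Int_part (2 * e) < Z.of_nat b)%Z
    by (apply lt_IZR; rewrite <- INR_IZR_INZ; lra).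
  lia.
Qed.

Theorem lemma1 (m : nat) (hm : (0 < m)%nat)
  (hpow : forall beta : nat, m <> (2 ^ beta)%nat)
  (i : nat) (e : R) :
  let T : Z := (2 ^ Z.of_nat (Nat.log2_up m) - Z.of_nat m - 1)%Z in
  (IZR T + 1) / 2 + INR i * INR m / 2 <= e ->
  e < (IZR T + 1) / 2 + (INR i + 1) * INR m / 2 ->
  code_len m e = (2 + i + Nat.log2 m)%nat.
Proof.
  intros T Hlo Hhi.
  set (c := (2 ^ Nat.log2_up m - m)%nat).
  assert (HT : IZR T + 1 = INR c).
  { pose proof (pow2_log2_lt_non_pow2 m hm hpow).
    unfold T, c; rewrite (log2_up_non_pow2 m hm hpow).
    rewrite INR_IZR_INZ, <- plus_IZR, Nat2Z.inj_sub, Nat2Z.inj_pow by lia.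
    f_equal; simpl in *; lia. }
  apply golomb_len_window; [exact hm | exact hpow |].
  apply rice_map_window.
  fold c; rewrite 2!plus_INR, 2!mult_INR, plus_INR; simpl (INR 1).
  rewrite HT in Hlo, Hhi; lra.
Qed.
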